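(* Let $n\ge2$, $0\le\alpha<1$, $\sigma=1-\alpha^2$, and let $M$ be the matrix of $S^*(\phi_{-\alpha})$, where $\phi_{-\alpha}(z)=\left(\dfrac{z+\alpha}{1+\alpha z}\right)^n$; explicitly $M$ is the $n\times n$ upper triangular Toeplitz matrix with $-\alpha$ on the diagonal, $\sigma$ on the first superdiagonal and $\sigma\alpha^{j-1}$ on the $j$-th superdiagonal ($1\le j\le n-1$). For real $\theta$ and real $\lambda$ with $|\lambda|<1$, let $D_n(\lambda,\theta)=\det\big(\mathscr{R}e(e^{-i\theta}M)-\lambda I_n\big)$. Then $$D_{n}(\lambda,\theta)=\dfrac{(1-\lambda^{2})^{-\frac{1}{2}}}{2^n}\,\mathscr{R}e\Bigg(\left(\left(1-\lambda^{2}\right)^{\frac{1}{2}}+i\lambda\right)\left(-2\alpha\cos\theta-(1+\alpha^{2})\lambda+i(1-\alpha^{2})(1-\lambda^{2})^{\frac{1}{2}}\right)^n\Bigg).$$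
   Context: $\mathscr{R}e(X)=\frac12(X+X^* )$ for a matrix $X$, and $\mathscr{R}e(z)$ is the real part of a complex number $z$. $S^*(\phi)$ denotes the restriction of the backward shift $S^*f=(f-f(0))/z$ to the model space $\mathbb{H}^2\ominus\phi\mathbb{H}^2$. *)

From HB Require Import structures.
From mathcomp Require Import all_boot all_order all_algebra.
From mathcomp Require Import all_classical all_reals all_analysis.
From mathcomp Require Import complex.
Set Implicit Arguments. Unset Strict Implicit. Unset Printing Implicit Defensive.
Import Order.TTheory GRing.Theory Num.Theory.
Local Open Scope ring_scope.
Local Open Scope complex_scope.

Definition Smat (R : realType) (n : nat) (alpha : R) : 'M[R[i]]_n :=
  \matrix_(i < n, j < n)
    (if i == j then (- alpha)%:C
     else if (i < j)%N then ((1 - alpha ^+ 2) * alpha ^+ (j - i).-1)%:C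
     else 0).

Definition adjmx (R : realType) (n : nat) (X : 'M[R[i]]_n) : 'M[R[i]]_n :=
  (map_mx conjc X)^T.
Definition ReMx (R : realType) (n : nat) (X : 'M[R[i]]_n) : 'M[R[i]]_n :=
  (2^-1 : R[i]) *: (X + adjmx X).

Definition expiC (R : realType) (theta : R) : R[i] := cos theta +i* sin theta.

Definition Dn (R : realType) (n : nat) (alpha lambda theta : R) : R[i] :=
  \det (ReMx (expiC (- theta) *: Smat n alpha) - (lambda%:C)%:M).

From HB Require Import structures.
From mathcomp Require Import all_boot all_order all_algebra.
From mathcomp Require Import all_classical all_reals all_analysis.
From mathcomp Require Import complex ring.
Set Implicit Arguments. Unset Strict Implicit. Unset Printing Implicit Defensive.
Import Order.TTheory GRing.Theory Num.Theory.
Local Open Scope ring_scope.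

(* Off the diagonal, the entries of Re(e^{-i theta} M) - lambda I are geometric
   in alpha along rows and columns.  Subtracting alpha times row (column) m from
   row (column) m+1 therefore clears the last row and column except for a 2x2
   corner, and D_n satisfies D_{n+2} = x D_{n+1} - (x^2 + y^2)/4 D_n, where
   z = x + i y is the complex number raised to the n-th power in the statement.
   With u = sqrt(1 - lambda^2) + i lambda, the right-hand side
   Re(u z^n) / (sqrt(1 - lambda^2) 2^n) obeys the same recurrence, because z
   is a root of X^2 - 2 x X + x^2 + y^2, and the two sides agree for n = 0, 1. *)

Section BorderedDeterminant.

Variable R : comNzRingType.
Implicit Types (f : nat -> nat -> R) (a : R).

Definition sqmx f k : 'M[R]_k := \matrix_(i < k, j < k) f i j.

Definition elimmx a m : 'M[R]_(m.+2) :=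
  \matrix_(i, j) ((i == j :> nat)%:R - a * ((i == m.+1 :> nat) && (j == m :> nat))%:R).

Lemma det_elimmx a m : \det (elimmx a m) = 1.
Proof.
rewrite det_trig.
  apply: big1 => i _; rewrite mxE eqxx /=.
  case: (eqVneq (val i) m) => [->|_]; last by rewrite andbF mulr0 subr0.
  by rewrite (ltn_eqF (ltnSn m)) mulr0 subr0.
apply/forallP => i; apply/forallP => j; apply/implyP => lt_ij.
rewrite mxE (ltn_eqF lt_ij) /=.
case: (eqVneq (val i) m.+1) => [ei|_]; last by rewrite mulr0 subr0.
case: (eqVneq (val j) m) => [ej|_]; last by rewrite mulr0 subr0.
by move: lt_ij; rewrite ei ej ltnNge leqnSn.
Qed.

Lemma elimmx_mulE a m (A : 'M[R]_(m.+2)) i j :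
  (elimmx a m *m A) i j = A i j - a * ((i == m.+1 :> nat)%:R * A (inord m) j).
Proof.
rewrite mxE; under eq_bigr => k _ do rewrite mxE mulrBl.
rewrite sumrB; congr (_ - _).
  rewrite (bigD1 i) //= eqxx mul1r big1 ?addr0 // => k ki.
  by rewrite eq_sym val_eqE (negbTE ki) mul0r.
rewrite (bigD1 (inord m)) //= inordK // eqxx andbT big1 ?addr0 ?mulrA // => k km.
case: (eqVneq (val k) m) => [ek|_]; last by rewrite andbF mulr0 mul0r.
by move: km; rewrite -val_eqE /= inordK // ek eqxx.
Qed.

Lemma mul_elimmx_trE a m (A : 'M[R]_(m.+2)) i j :
  (A *m (elimmx a m)^T) i j = A i j - a * ((j == m.+1 :> nat)%:R * A i (inord m)).
Proof. by rewrite -[A]trmxK -trmx_mul mxE elimmx_mulE !mxE. Qed.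

Lemma elimmx_congrE f a m i j :
  (elimmx a m *m sqmx f m.+2 *m (elimmx a m)^T) i j =
  (f i j - a * ((i == m.+1 :> nat)%:R * f m j))
  - a * ((j == m.+1 :> nat)%:R * (f i m - a * ((i == m.+1 :> nat)%:R * f m m))).
Proof. by rewrite mul_elimmx_trE !elimmx_mulE !mxE !inordK. Qed.

Lemma bump_small h k : (k < h)%N -> bump h k = k.
Proof. by move=> lt_kh; rewrite /bump leqNgt lt_kh. Qed.

Lemma bump_large h k : (h <= k)%N -> bump h k = k.+1.
Proof. by move=> le_hk; rewrite /bump le_hk add1n. Qed.

(* Congruence by [elimmx a m] clears the last row and column outside the final
   2x2 block; two Laplace expansions then leave a three-term recurrence. *)
Lemma det_sqmx_rec f a m :
  (forall i, (i < m)%N -> f i m.+1 = a * f i m) ->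
  (forall j, (j < m)%N -> f m.+1 j = a * f m j) ->
  \det (sqmx f m.+2) =
   (f m.+1 m.+1 - a * f m m.+1 - a * f m.+1 m + a ^+ 2 * f m m) * \det (sqmx f m.+1)
   - (f m m.+1 - a * f m m) * (f m.+1 m - a * f m m) * \det (sqmx f m).
Proof.
move=> f_col f_row.
have -> : \det (sqmx f m.+2) = \det (elimmx a m *m sqmx f m.+2 *m (elimmx a m)^T).
  by rewrite !det_mulmx det_tr det_elimmx mul1r mulr1.
have KE (i j : 'I_m.+2) := elimmx_congrE f a i j.
set K := elimmx a m *m sqmx f m.+2 *m (elimmx a m)^T in KE *.
clearbody K.
have lt_m_Sm := ltnSn m.
rewrite (expand_det_col K ord_max) !big_ord_recr /= big1; last first.
  move=> i _; rewrite KE /= (ltn_eqF (ltn_trans (ltn_ord i) lt_m_Sm)) eqxx.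
  by rewrite !mul0r !mulr0 !subr0 mul1r f_col // subrr mul0r.
rewrite add0r !KE /= eqxx (ltn_eqF lt_m_Sm) !mul0r !mulr0 !subr0 !mul1r.
have minor_max : \det (row' ord_max (col' ord_max K)) = \det (sqmx f m.+1).
  congr (\det _); apply/matrixP => i j; rewrite !mxE KE !lift_max /=.
  by rewrite !(ltn_eqF (ltn_ord _)) !mul0r !mulr0 !subr0.
have minor_pen : \det (row' (widen_ord (leqnSn m.+1) ord_max) (col' ord_max K))
    = (f m.+1 m - a * f m m) * \det (sqmx f m).
  rewrite (expand_det_row _ ord_max) big_ord_recr /= big1 ?add0r; last first.
    move=> j _; have lt_jm := ltn_ord j.
    rewrite !mxE KE /= bump_large // !bump_small ?(ltn_trans lt_jm) // eqxx.
    rewrite (ltn_eqF (ltn_trans lt_jm lt_m_Sm)) mul0r mulr0 subr0 mul1r.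
    by rewrite f_row // subrr mul0r.
  rewrite !mxE KE /= bump_large // bump_small // eqxx (ltn_eqF lt_m_Sm).
  rewrite mul0r mulr0 subr0 mul1r /cofactor -signr_odd oddD addbb expr0 mul1r.
  congr (_ * \det _); apply/matrixP => i j; rewrite !mxE KE /=.
  rewrite !(bump_small (ltn_ord i)) (bump_small (ltn_ord j)).
  rewrite (bump_small (ltnW (ltn_ord j) : (j < m.+1)%N)).
  by rewrite !(ltn_eqF (ltn_trans (ltn_ord _) lt_m_Sm)) !mul0r !mulr0 !subr0.
rewrite /cofactor /= minor_max minor_pen.
have -> : (-1) ^+ (m + m.+1) = -1 :> R by rewrite -signr_odd addnS /= oddD addbb.
have -> : (-1) ^+ (m.+1 + m.+1) = 1 :> R by rewrite -signr_odd oddD addbb.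
set D1 := \det (sqmx f m.+1); set D0 := \det (sqmx f m).
ring.
Qed.

End BorderedDeterminant.

Lemma eq_rec2 (R : pzRingType) (p q : R) (u v : nat -> R) :
  (forall n, u n.+2 = p * u n.+1 - q * u n) ->
  (forall n, v n.+2 = p * v n.+1 - q * v n) ->
  u 0%N = v 0%N -> u 1%N = v 1%N -> u =1 v.
Proof.
move=> u_rec v_rec uv0 uv1.
suff uv n : u n = v n /\ u n.+1 = v n.+1 by move=> n; case: (uv n).
elim: n => [|n [uvn uvSn]]; first by [].
by rewrite u_rec v_rec uvn uvSn.
Qed.

Local Open Scope complex_scope.

Lemma Re_mul_exprSS (R : rcfType) (u z : R[i]) n :
  complex.Re (u * z ^+ n.+2) =
  2 * complex.Re z * complex.Re (u * z ^+ n.+1)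
  - (complex.Re z ^+ 2 + complex.Im z ^+ 2) * complex.Re (u * z ^+ n).
Proof.
rewrite !exprSr !mulrA; case: (u * _ ^+ n) => a b; case: z => x y; simpc => /=; ring.
Qed.

Section ReSmatDet.

Variables (R : rcfType) (al c s l sq : R).
Hypothesis cs2 : c ^+ 2 + s ^+ 2 = 1.
Hypothesis sq2 : sq ^+ 2 = 1 - l ^+ 2.
Hypothesis sq_gt0 : 0 < sq.

Definition ReSmat_entry (i j : nat) : R[i] :=
  if i == j then (- (al * c) - l)%:C
  else if (i < j)%N then ((1 - al ^+ 2) / 2 * al ^+ (j - i).-1)%:C * (c -i* s)
  else ((1 - al ^+ 2) / 2 * al ^+ (i - j).-1)%:C * (c +i* s).

Lemma predn_subSn i m : (i < m)%N -> (m.+1 - i).-1 = (m - i).-1.+1.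
Proof. by move=> lt_im; rewrite subSn 1?ltnW // prednK // subn_gt0. Qed.

Lemma ReSmat_entry_col i m : (i < m)%N ->
  ReSmat_entry i m.+1 = al%:C * ReSmat_entry i m.
Proof.
move=> lt_im; have lt_iSm := ltn_trans lt_im (ltnSn m).
rewrite /ReSmat_entry (ltn_eqF lt_im) (ltn_eqF lt_iSm) lt_im lt_iSm predn_subSn //.
by rewrite (exprS al (m - i).-1) mulrCA rmorphM mulrA.
Qed.

Lemma ReSmat_entry_row j m : (j < m)%N ->
  ReSmat_entry m.+1 j = al%:C * ReSmat_entry m j.
Proof.
move=> lt_jm; have lt_jSm := ltn_trans lt_jm (ltnSn m).
rewrite /ReSmat_entry (gtn_eqF lt_jm) (gtn_eqF lt_jSm).
rewrite ltnNge (ltnW lt_jSm) ltnNge (ltnW lt_jm) /= predn_subSn //.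
by rewrite (exprS al (m - j).-1) mulrCA rmorphM mulrA.
Qed.

Definition ReSmat_root : R[i] :=
  (- 2 * al * c - (1 + al ^+ 2) * l) +i* ((1 - al ^+ 2) * sq).

Lemma ReSmat_det_rec m :
  \det (sqmx ReSmat_entry m.+2) =
   (complex.Re ReSmat_root)%:C * \det (sqmx ReSmat_entry m.+1)
   - ((complex.Re ReSmat_root ^+ 2 + complex.Im ReSmat_root ^+ 2) / 4)%:C
     * \det (sqmx ReSmat_entry m).
Proof.
rewrite (det_sqmx_rec (a := al%:C)); last first.
- by move=> j /ReSmat_entry_row.
- by move=> i /ReSmat_entry_col.
rewrite /ReSmat_entry !eqxx (ltn_eqF (ltnSn m)) (gtn_eqF (ltnSn m)) ltnSn.
rewrite ltnNge leqnSn /= subSn // subnn /= expr0 mulr1.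
congr (_ * _ - _ * _); simpc; congr (_ +i* _); [by field | | by ring].
have -> : (1 - al ^+ 2) / 2 * s * ((1 - al ^+ 2) / 2 * s)
          = ((1 - al ^+ 2) / 2) ^+ 2 * s ^+ 2 by ring.
have -> : s ^+ 2 = 1 - c ^+ 2 by rewrite -cs2 addrAC subrr add0r.
by rewrite [(_ * sq) ^+ 2]exprMn sq2; field.
Qed.

Lemma ReSmat_det_closed n :
  \det (sqmx ReSmat_entry n) =
  (complex.Re ((sq +i* l) * ReSmat_root ^+ n) / (sq * 2 ^+ n))%:C.
Proof.
have sq_neq0 : sq != 0 by rewrite gt_eqF.
move: n; apply: (eq_rec2 ReSmat_det_rec) => [k||].
- rewrite Re_mul_exprSS -!rmorphM -rmorphB; congr (_%:C).
  by rewrite !exprS; field; rewrite expf_neq0 // pnatr_eq0.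
- by rewrite det_mx00 expr0 mulr1 /= mulr1 divff.
- rewrite det_mx11 mxE /ReSmat_entry expr1 /=; simpc; congr (_ +i* _).
  by field.
Qed.

End ReSmatDet.

Lemma Dn_ReSmat_det (R : realType) n (al l th : R) :
  Dn n al l th = \det (sqmx (ReSmat_entry al (cos th) (sin th) l) n).
Proof.
rewrite /Dn /ReMx /adjmx; congr (\det _); apply/matrixP => i j; rewrite !mxE.
rewrite /expiC cosN sinN /ReSmat_entry -!val_eqE /=.
have -> : (2^-1 : R[i]) = (2^-1 : R)%:C by rewrite fmorphV /= rmorph_nat.
case: ltngtP => _; rewrite ?mulr0n ?mulr1n; simpc; congr (_ +i* _).
1-4: by ring.
by field.
Qed.

Unset Implicit Arguments.

Theorem mainTheorem7 (R : realType) (n : nat) (alpha theta lambda : R) :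
  (2 <= n)%N -> 0 <= alpha -> alpha < 1 -> `|lambda| < 1 ->
  Dn n alpha lambda theta =
  ((Num.sqrt (1 - lambda ^+ 2))^-1 / 2 ^+ n)%:C *
  (complex.Re ((Num.sqrt (1 - lambda ^+ 2) +i* lambda) *
       ((- 2 * alpha * cos theta - (1 + alpha ^+ 2) * lambda)
          +i* ((1 - alpha ^+ 2) * Num.sqrt (1 - lambda ^+ 2))) ^+ n))%:C.
Proof.
move=> _ _ _ lt_l1.
set sq := Num.sqrt (1 - lambda ^+ 2).
have sq_gt0 : 0 < sq.
  by rewrite sqrtr_gt0 subr_gt0 -real_normK ?num_real // expr_lt1.
have sq2 : sq ^+ 2 = 1 - lambda ^+ 2 by rewrite sqr_sqrtr // ltW // -sqrtr_gt0.
rewrite Dn_ReSmat_det (ReSmat_det_closed alpha (cos2Dsin2 theta) sq2 sq_gt0).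
by rewrite -rmorphM invfM mulrC.
Qed.
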